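(* Let $m,n$ be positive integers and for each $1\le i\le 2m$ let $\mathbf{x}^{(i)}=(\mathbf{x}^{(i)}_1,\dots,\mathbf{x}^{(i)}_n)$ be complex numbers in the open unit disc (or formal variables, the identity holding as formal power series). Then $$\sum_{\lambda:\ \ell(\lambda)\le n}s_\lambda(\mathbf{x}^{(1)})\cdots s_\lambda(\mathbf{x}^{(2m)})=\prod_{i=1}^{2m}\frac{1}{V(\mathbf{x}^{(i)})}\cdot\mathrm{Det}^{[2m]}\left(\frac{1}{1-\mathbf{x}^{(1)}_{i_1}\cdots\mathbf{x}^{(2m)}_{i_{2m}}}\right)_{1\le i_1,\dots,i_{2m}\le n}.$$
   Context: $V(\mathbf{x})=\prod_{1\le i<j\le n}(\mathbf{x}_i-\mathbf{x}_j)$; $s_\lambda(\mathbf{x})=\det(\mathbf{x}_i^{\lambda_j+n-j})_{1\le i,j\le n}/V(\mathbf{x})$ is the Schur polynomial in $n$ variables, the sum being over all partitions with at most $n$ parts. Hyperdeterminant: $\mathrm{Det}^{[2m]}(A):=\frac{1}{n!}\sum_{\sigma_1,\dots,\sigma_{2m}\in\mathfrak{S}_n}\mathrm{sgn}(\sigma_1)\cdots\mathrm{sgn}(\sigma_{2m})\prod_{i=1}^nA(\sigma_1(i),\dots,\sigma_{2m}(i))$. *)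

From HB Require Import structures.
From mathcomp Require Import all_boot all_order all_algebra all_fingroup.
From mathcomp Require Import complex.
From mathcomp Require Import all_classical all_reals all_analysis.
Set Implicit Arguments. Unset Strict Implicit. Unset Printing Implicit Defensive.
Import Order.TTheory GRing.Theory Num.Theory.
Import numFieldTopology.Exports numFieldNormedType.Exports.
Local Open Scope ring_scope.

Definition vandermonde (C : comRingType) (n : nat) (x : 'I_n -> C) : C :=
  \prod_(i < n) \prod_(j < n | (i < j)%N) (x i - x j).

(* Schur polynomial evaluated at x, bialternant definition:
   s_lam(x) = det (x_i ^ (lam_j + n - j))_{i,j} / V(x); with 0-based j the
   exponent is lam_j + (n - 1 - j). *)
Definition schur (C : fieldType) (n : nat) (lam : 'I_n -> nat) (x : 'I_n -> C) : C :=
  \det (\matrix_(i < n, j < n) x i ^+ (lam j + (n - j.+1))%N) / vandermonde x.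

(* Partitions with at most n parts and all parts < N, encoded as weakly
   decreasing functions 'I_n -> 'I_N (parts lam_1 >= ... >= lam_n >= 0). *)
Definition partitions_lt (n N : nat) : {set {ffun 'I_n -> 'I_N}} :=
  [set l : {ffun 'I_n -> 'I_N} |
     [forall i : 'I_n, forall j : 'I_n, (i <= j)%N ==> (l j <= l i)%N]].

(* Hyperdeterminant of order k (k = 2m in the paper) of a tensor
   A : ('I_k -> 'I_n) -> C, A(i_1,...,i_k) = A (fun r => i_r):
   Det(A) = 1/n! sum_{sigma_1..sigma_k in S_n} sgn(sigma_1)...sgn(sigma_k)
              prod_{i} A(sigma_1(i),...,sigma_k(i)). *)
Definition hyperdet (C : fieldType) (k n : nat) (A : ('I_k -> 'I_n) -> C) : C :=
  (n`!%:R)^-1 *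
  \sum_(s : {ffun 'I_k -> 'S_n})
     ((\prod_(r < k) (-1) ^+ odd_perm (s r)) *
      \prod_(i < n) A (fun r => s r i)).

(* Topology on the complex numbers R[i]: the canonical metric topology of the
   numeric field R[i] (the same one MathComp-Analysis gives every
   numClosedFieldType via numFieldTopology), declared on the head symbol
   `complex` so that it is found by canonical-structure inference. *)
HB.instance Definition _ (R : realType) :=
  PseudoPointedMetric.copy R[i] (R[i])^o.

From HB Require Import structures.
From mathcomp Require Import all_boot all_order all_algebra all_fingroup.
From mathcomp Require Import complex.
From mathcomp Require Import all_classical all_reals all_analysis.
From mathcomp Require Import zify.
Import Order.TTheory GRing.Theory Num.Theory.
Import numFieldTopology.Exports numFieldNormedType.Exports.
Local Open Scope classical_set_scope.
Local Open Scope ring_scope.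
Set Implicit Arguments. Unset Strict Implicit. Unset Printing Implicit Defensive.

(* Expanding each entry 1 / (1 - p) of the tensor as a geometric series and
   using multilinearity, the hyperdeterminant of the series truncated at
   degree M is 1/n! times the sum, over all exponent vectors a < M, of the
   product of the 2m alternants det (x^(k)_j ^ a_i).  Each alternant is
   alternating in a; since there is an even number of them, their product
   is symmetric in a and vanishes when a has a repeated entry.  The sum is
   therefore n! times the sum over strictly decreasing a, that is over
   a = lambda + (n-1, ..., 1, 0) with lambda a partition, and the
   bialternant formula turns alternant / Vandermonde into a Schur
   polynomial.  For M = N + n - 1 the partitions obtained are exactly those
   with parts < N; letting N grow, the geometric series converge because
   every product x^(1)_i1 ... x^(2m)_i2m lies in the unit disc. *)

Definition strictly_decreasing n (b : 'I_n -> nat) :=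
  [forall i : 'I_n, forall j : 'I_n, (i < j)%N ==> (b j < b i)%N].

Lemma strictly_decreasingP n (b : 'I_n -> nat) :
  reflect (forall i j : 'I_n, (i < j)%N -> (b j < b i)%N) (strictly_decreasing b).
Proof.
apply: (iffP forallP) => [H i j | H i]; first by move/(implyP (forallP (H i) j)).
by apply/forallP => j; apply/implyP/H.
Qed.

Lemma increasing_perm_eq1 n (s : 'S_n) :
  (forall i j : 'I_n, (i < j)%N -> (s i < s j)%N) -> s = 1%g.
Proof.
move=> s_incr.
have le_s (i : 'I_n) : (i <= s i)%N.
  case: i => i; elim: i => // i IHi lt_i_n.
  have := s_incr (Ordinal (ltnW lt_i_n)) (Ordinal lt_i_n) (ltnSn i).
  by have := IHi (ltnW lt_i_n); rewrite /=; lia.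
have sum_s : (\sum_(i < n) (s i - i) = 0)%N.
  apply/eqP; rewrite -(eqn_add2r (\sum_(i < n) i)) add0n -big_split /=.
  rewrite (eq_bigr _ (fun i _ => subnK (le_s i))).
  by rewrite [X in _ == X](reindex_inj (@perm_inj _ s)).
apply/permP => i; apply/val_inj; rewrite perm1 /=.
have /eqP := sum_s; rewrite sum_nat_eq0 => /forallP /(_ i).
by have := le_s i; lia.
Qed.

Lemma strictly_decreasing_perm_eq1 n (b : 'I_n -> nat) (s : 'S_n) :
  strictly_decreasing b -> strictly_decreasing (b \o s) -> s = 1%g.
Proof.
move=> /strictly_decreasingP b_decr /strictly_decreasingP bs_decr.
apply: increasing_perm_eq1 => i j lt_ij; have := bs_decr i j lt_ij => /=.
case: (ltngtP (s i) (s j)) => // [lt_sj_si | /val_inj ->]; last by rewrite ltnn.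
by have := b_decr _ _ lt_sj_si; lia.
Qed.

Lemma sorting_perm_exists n (a : 'I_n -> nat) : injective a ->
  exists s : 'S_n, strictly_decreasing (a \o s).
Proof.
move=> a_inj; pose t := [tuple a i | i < n].
have perm_sort_t : perm_eq (sort geq t) t by rewrite perm_sort.
have [s def_sort] := tuple_permP perm_sort_t.
have size_sort : size (sort geq t) = n by rewrite (perm_size perm_sort_t) size_tuple.
have nth_sort (i : 'I_n) : nth 0%N (sort geq t) i = a (s i).
  by rewrite def_sort nth_mktuple tnth_mktuple.
have uniq_sort : uniq (sort geq t).
  by rewrite (perm_uniq perm_sort_t) map_inj_uniq ?enum_uniq.
have /(pairwiseP 0%N) sorted_sort : pairwise geq (sort geq t).
  rewrite -sorted_pairwise; last by move=> y x z /= le_yx le_zy; apply: leq_trans le_zy le_yx.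
  by apply: sort_sorted => x y; apply: leq_total.
exists s; apply/strictly_decreasingP => i j lt_ij /=.
have := sorted_sort i j; rewrite !inE size_sort !ltn_ord !nth_sort => /(_ isT isT lt_ij).
have : nth 0%N (sort geq t) i != nth 0%N (sort geq t) j.
  by rewrite nth_uniq ?size_sort // neq_ltn lt_ij.
by rewrite !nth_sort /geq; lia.
Qed.

Lemma sorting_perm_unique n (a : 'I_n -> nat) : injective a ->
  exists s0 : 'S_n, forall s : 'S_n, strictly_decreasing (a \o s) = (s == s0).
Proof.
move=> a_inj; have [s0 decr_s0] := sorting_perm_exists a_inj.
exists s0 => s; apply/idP/eqP => [decr_s | ->] //.
suff /(congr1 (fun g => g * s0)%g) : (s * s0^-1)%g = 1%g by rewrite mulgKV mul1g.
apply: strictly_decreasing_perm_eq1 decr_s0 _.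
by apply: etrans decr_s; apply: eq_forallb => i; apply: eq_forallb => j; rewrite /= !permM !permKV.
Qed.

Section SymmetricSum.
Variables (C : pzSemiRingType) (n M : nat) (G : ('I_n -> nat) -> C).
Hypothesis G_perm : forall a (s : 'S_n), G (a \o s) = G a.
Hypothesis G_repeat : forall a (i j : 'I_n), i != j -> a i = a j -> G a = 0.

Lemma sum_ffun_symmetric :
  \sum_(a : {ffun 'I_n -> 'I_M}) G (fun i => a i) =
  n`!%:R * \sum_(b : {ffun 'I_n -> 'I_M} | strictly_decreasing (fun i => b i))
             G (fun i => b i).
Proof.
transitivity (\sum_(a : {ffun 'I_n -> 'I_M})
   \sum_(s : 'S_n | strictly_decreasing (fun i => a (s i))) G (fun i => a i)).
  apply: eq_bigr => a _.
  have [a_inj | /injectiveP] := injectiveP (fun i => a i : nat).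
    have [s0 sort_s0] := sorting_perm_unique a_inj.
    by rewrite (eq_bigl _ _ sort_s0) big_pred1_eq.
  case/injectivePn => i [j neq_ij eq_aij].
  by rewrite (G_repeat neq_ij eq_aij) big1.
rewrite (exchange_big_dep xpredT) //= mulr_natl -card_Sn -sumr_const.
apply: eq_bigr => s _.
pose unsort (b : {ffun 'I_n -> 'I_M}) := [ffun i => b ((s^-1)%g i)].
have unsort_inj : injective unsort.
  by move=> b1 b2 /ffunP eq_b; apply/ffunP => i; have := eq_b (s i); rewrite !ffunE permK.
have unsortK (b : {ffun 'I_n -> 'I_M}) :
    (fun i => unsort b (s i) : nat) = (fun i => b i : nat).
  by apply: funext => i; rewrite ffunE permK.
rewrite (reindex_inj unsort_inj); apply: eq_big => [b | b _]; first by rewrite unsortK.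
by rewrite -(G_perm (fun i => unsort b i) s) /comp unsortK.
Qed.

End SymmetricSum.

Lemma strictly_decreasing_addn n (b : 'I_n.+1 -> nat) : strictly_decreasing b ->
  forall i j : 'I_n.+1, (i <= j)%N -> (b j + j <= b i + i)%N.
Proof.
move=> /strictly_decreasingP b_decr i j le_ij.
pose f k := (b (inord k) + k)%N.
have f_homo : {in gtn n.+1 &, {homo f : k l / (k <= l)%N >-> (l <= k)%N}}.
  apply: homo_leq_in => [k | k l p le_lk le_pl | k l lt_k lt_l p /andP[_ lt_pl] |].
  - exact: leqnn.
  - exact: leq_trans le_pl le_lk.
  - exact: ltn_trans lt_pl lt_l.
  move=> k lt_k lt_Sk; have := b_decr (inord k) (inord k.+1).
  by rewrite /f !inordK //; lia.
by have := f_homo i j (ltn_ord i) (ltn_ord j) le_ij; rewrite /f !inord_val.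
Qed.

Lemma sum_strictly_decreasing_partitions (C : nmodType) n N (G : ('I_n -> nat) -> C) :
  (0 < n)%N ->
  \sum_(b : {ffun 'I_n -> 'I_(N + n.-1)} | strictly_decreasing (fun i => b i))
     G (fun i => b i)
  = \sum_(l in partitions_lt n N) G (fun i => (l i + (n - i.+1))%N).
Proof.
case: n G => [//|n] G _; rewrite [n.+1.-1]/=.
have shift_subproof (l : {ffun 'I_n.+1 -> 'I_N}) i : (l i + (n - i) < N + n)%N.
  by have := ltn_ord (l i); lia.
pose shift l : {ffun 'I_n.+1 -> 'I_(N + n)} := [ffun i => Ordinal (shift_subproof l i)].
transitivity (\sum_(b in shift @: partitions_lt n.+1 N) G (fun i => b i)).
  apply: eq_bigl => b; apply/idP/imsetP => [b_decr | [l l_part ->]].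
    have b_addn := strictly_decreasing_addn b_decr.
    have lb_b (i : 'I_n.+1) : (n - i <= b i)%N by have := b_addn i ord_max (leq_ord i) => /=; lia.
    have ub_b (i : 'I_n.+1) : (b i - (n - i) < N)%N.
      by have := b_addn ord0 i (leq0n _); have := ltn_ord (b ord0); have := lb_b i => /=; lia.
    exists [ffun i => Ordinal (ub_b i)].
      rewrite inE; apply/forallP => i; apply/forallP => j; apply/implyP => le_ij.
      by rewrite !ffunE /=; have := b_addn i j le_ij; have := lb_b i; have := lb_b j; lia.
    by apply/ffunP => i; apply: val_inj; rewrite !ffunE /= ffunE /= subnK ?lb_b.
  move: l_part; rewrite inE => /forallP l_part.
  apply/strictly_decreasingP => i j lt_ij; rewrite !ffunE /=.
  by have := implyP (forallP (l_part i) j) (ltnW lt_ij); have := ltn_ord j; lia.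
rewrite big_imset => [|l1 l2 _ _ /ffunP eq_shift].
  by apply: eq_bigr => l _; congr G; apply: funext => i; rewrite ffunE.
apply/ffunP => i; apply: val_inj; have := congr1 val (eq_shift i); rewrite !ffunE /=; lia.
Qed.

Definition alternant (C : comPzRingType) n (y : 'I_n -> C) (a : 'I_n -> nat) : C :=
  \det (\matrix_(i, j) y j ^+ a i).

Lemma alternant_perm (C : comPzRingType) n (y : 'I_n -> C) a (s : 'S_n) :
  alternant y (a \o s) = (-1) ^+ s * alternant y a.
Proof.
rewrite /alternant -det_perm -det_mulmx -row_permE; congr (\det _).
by apply/matrixP => i j; rewrite !mxE.
Qed.

Lemma alternant_eq0 (C : comPzRingType) n (y : 'I_n -> C) a (i j : 'I_n) :
  i != j -> a i = a j -> alternant y a = 0.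
Proof. by move=> neq_ij eq_aij; apply: (determinant_alternate neq_ij) => k; rewrite !mxE eq_aij. Qed.

Lemma schur_alternant (C : fieldType) n (lam : 'I_n -> nat) (x : 'I_n -> C) :
  schur lam x = alternant x (fun i => lam i + (n - i.+1))%N / vandermonde x.
Proof.
by rewrite /schur /alternant -det_tr; congr (\det _ / _); apply/matrixP => i j; rewrite !mxE.
Qed.

Lemma hyperdet_geometric_partial_sum (C : fieldType) k n M (x : 'I_k -> 'I_n -> C) :
  hyperdet (fun f : 'I_k -> 'I_n => \sum_(c < M) (\prod_(r < k) x r (f r)) ^+ c)
  = (n`!%:R)^-1 * \sum_(a : {ffun 'I_n -> 'I_M}) \prod_(r < k) alternant (x r) (fun i => a i).
Proof.
rewrite /hyperdet; congr (_ * _).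
under eq_bigr do rewrite bigA_distr_bigA mulr_sumr.
rewrite exchange_big /=; apply: eq_bigr => a _.
rewrite /alternant /determinant bigA_distr_bigA /=; apply: eq_bigr => s _.
rewrite big_split /=; congr (_ * _).
under eq_bigr do rewrite -prodrXl.
by rewrite exchange_big /=; apply: eq_bigr => r _; apply: eq_bigr => i _; rewrite !mxE.
Qed.

Lemma sum_prod_schur_hyperdet (C : fieldType) m n (x : 'I_(2 * m) -> 'I_n -> C) N :
  (0 < m)%N -> (0 < n)%N -> (n`!%:R : C) != 0 ->
  \sum_(l in partitions_lt n N) \prod_(k < 2 * m) schur (fun j => nat_of_ord (l j)) (x k)
  = (\prod_(k < 2 * m) (vandermonde (x k))^-1) *
    hyperdet (fun f : 'I_(2 * m) -> 'I_n =>
      \sum_(c < N + n.-1) (\prod_(k < 2 * m) x k (f k)) ^+ c).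
Proof.
move=> m_gt0 n_gt0 nfact_neq0.
pose G a := \prod_(k < 2 * m) alternant (x k) a.
have G_perm a (s : 'S_n) : G (a \o s) = G a.
  rewrite /G; under eq_bigr do rewrite alternant_perm.
  by rewrite big_split /= prodr_const card_ord exprM sqrr_sign expr1n mul1r.
have G_repeat a (i j : 'I_n) : i != j -> a i = a j -> G a = 0.
  have k0 : (0 < 2 * m)%N by rewrite muln_gt0.
  move=> neq_ij eq_aij; rewrite /G (bigD1 (Ordinal k0)) //=.
  by rewrite (alternant_eq0 _ neq_ij eq_aij) mul0r.
rewrite hyperdet_geometric_partial_sum (sum_ffun_symmetric _ G_perm G_repeat).
rewrite mulKf // (sum_strictly_decreasing_partitions N G) // mulr_sumr.
apply: eq_bigr => l _; rewrite -big_split /=; apply: eq_bigr => k _.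
by rewrite schur_alternant mulrC.
Qed.

Lemma cvg_hyperdet (K : numFieldType) k n (A : nat -> ('I_k -> 'I_n) -> K)
    (L : ('I_k -> 'I_n) -> K) :
  (forall f, A N f @[N --> \oo] --> L f) -> hyperdet (A N) @[N --> \oo] --> hyperdet L.
Proof.
move=> cvgA; apply: cvgMl_tmp.
have add_cont : continuous (fun z : K * K => z.1 + z.2) by exact: add_continuous.
have mul_cont : continuous (fun z : K * K => z.1 * z.2) by exact: mul_continuous.
apply: (cvg_big add_cont) => s _; apply: cvgMl_tmp.
by apply: (cvg_big mul_cont) => i _; apply: cvgA.
Qed.

Lemma cvg_expr_complex (R : realType) (p : R[i]) : `|p| < 1 -> p ^+ M @[M --> \oo] --> 0.
Proof.
rewrite normc_def; set r := Num.sqrt _ => r_lt1.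
have /cvgr0Pnorm_lt r_cvg : r ^+ M @[M --> \oo] --> 0.
  by apply: cvg_expr; rewrite ger0_norm ?sqrtr_ge0 // -ltcR.
apply/(@cvgr0Pnorm_lt R[i] R[i]^o) => e e_gt0.
have e_real := gtr0_real e_gt0; rewrite -(RRe_real e_real) ltcR in e_gt0 *.
apply: filterS (r_cvg _ e_gt0) => M /=.
by move=> lt_rM; rewrite normrX normc_def -/r -rmorphXn ltcR (le_lt_trans (ler_norm _) lt_rM).
Qed.

Lemma cvg_geometric_sum_complex (R : realType) (p : R[i]) : `|p| < 1 ->
  \sum_(c < M) p ^+ c @[M --> \oo] --> (1 - p)^-1.
Proof.
move=> p_lt1.
have p_neq1 : 1 - p != 0 by rewrite subr_eq0; apply: contraTneq p_lt1 => <-; rewrite normr1 ltxx.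
have sumE M : \sum_(c < M) p ^+ c = (1 - p ^+ M) / (1 - p).
  by apply: (mulIf p_neq1); rewrite mulfVK // mulrC -opprB mulNr -subrX1 opprB.
have cvg_quot : (1 - p ^+ M) / (1 - p) @[M --> \oo] --> (1 - 0) / (1 - p).
  apply: (@cvgMr_tmp R[i] nat \oo _ (fun M => 1 - p ^+ M)).
  by apply: (@cvgB R[i] R[i]^o); [apply: cvg_cst | apply: cvg_expr_complex].
rewrite subr0 mul1r in cvg_quot.
by under eq_cvg do rewrite sumE.
Qed.

Lemma normr_prod_lt1 (K : numDomainType) k (z : 'I_k -> K) :
  (0 < k)%N -> (forall r, `|z r| < 1) -> `|\prod_(r < k) z r| < 1.
Proof.
move=> k_gt0 z_lt1; rewrite normr_prod (bigD1 (Ordinal k_gt0)) //=.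
apply: le_lt_trans (z_lt1 (Ordinal k_gt0)).
by apply: ler_piMr => //; apply: prodr_ile1 => r _; rewrite normr_ge0 ltW.
Qed.

Unset Implicit Arguments.

Theorem corollary3p2 (R : realType) (m n : nat) (x : 'I_(2 * m) -> 'I_n -> R[i]) :
  (0 < m)%N -> (0 < n)%N ->
  (forall k j, `|x k j| < 1) ->
  (forall k, injective (x k)) ->
  (fun N : nat => \sum_(l in partitions_lt n N)
       \prod_(k < 2 * m) schur (fun j => nat_of_ord (l j)) (x k))
  @ \oo -->
  (\prod_(k < 2 * m) (vandermonde (x k))^-1) *
    hyperdet (fun f : 'I_(2 * m) -> 'I_n =>
                (1 - \prod_(k < 2 * m) x k (f k))^-1).
Proof.
move=> m_gt0 n_gt0 x_lt1 _.
have nfact_neq0 : (n`!%:R : R[i]) != 0 by rewrite pnatr_eq0 -lt0n fact_gt0.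
rewrite (funext (fun N => sum_prod_schur_hyperdet x N m_gt0 n_gt0 nfact_neq0)).
have prod_lt1 (f : 'I_(2 * m) -> 'I_n) : `|\prod_(k < 2 * m) x k (f k)| < 1.
  by apply: normr_prod_lt1; rewrite ?muln_gt0.
have := cvg_hyperdet (fun f => cvg_geometric_sum_complex (prod_lt1 f)).
by rewrite -(cvg_shiftn n.-1); apply: cvgMl_tmp.
Qed.
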